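(* Let $N\ge2$, $\rho\in(0,1)\setminus\{\tfrac12\}$, $f<0$, $g<0$, and $\nu=i\omega$ with $\omega\in\mathbb{R}\setminus\{0\}$. Then for every $k\in\{1,\dots,N\}$, whenever the denominator below is nonzero, $$a_k(\nu)=\kappa^k\,\frac{(\mu_+-\mu_+^{-1})\mu_+^{N-k}-(\mu_--\mu_-^{-1})\mu_-^{N-k}}{(\mu_+-\mu_+^{-1})\mu_+^{N}-(\mu_--\mu_-^{-1})\mu_-^{N}},$$ where $\mu_\pm=\mu_\pm(\nu)$.
   Context: Model and $a_k$: agents $0,\dots,N$ with deviations $z_k$, leader $z_0$ prescribed; for $1\le i\le N-1$, $\ddot z_i=f\{z_i-(1-\rho)z_{i-1}-\rho z_{i+1}\}+g\{\dot z_i-(1-\rho)\dot z_{i-1}-\rho\dot z_{i+1}\}$; $\ddot z_N=f\{z_N-z_{N-1}\}+g\{\dot z_N-\dot z_{N-1}\}$. Written as $\dot z=Mz+\Gamma_0(t)$ with $z=(z_1,\dot z_1,\dots,z_N,\dot z_N)^T$, $M=I_N\otimes A+P\otimes K$, $A=\begin{pmatrix}0&1\\0&0\end{pmatrix}$, $K=\begin{pmatrix}0&0\\ f&g\end{pmatrix}$, $P=I_N-Q_\rho$ ($Q_\rho$: zero diagonal, $(Q_\rho)_{i,i+1}=\rho$ for $1\le i\le N-1$, $(Q_\rho)_{i,i-1}=1-\rho$ for $2\le i\le N-1$, $(Q_\rho)_{N,N-1}=1$, else $0$). For $\nu\in i\mathbb{R}$ not an eigenvalue of $M$, $a(\nu)=-(M-\nu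 I)^{-1}g_0(\nu)$ with $g_0(\nu)=-(1-\rho)(f+g\nu)e_2$, and $a_k(\nu)$ is the $(2k-1)$-th entry of $a(\nu)$ (the steady-state amplitude of $z_k$ when $z_0(t)=e^{\nu t}$). Notation: $\kappa=\frac{1-\rho}{\rho}$; $\gamma(\nu)=\frac{f+g\nu-\nu^2}{f+g\nu}$; $\mu_\pm(\nu)=\frac{1}{2\rho}\left(\gamma\pm\sqrt{\gamma^2-4\rho(1-\rho)}\right)$, the two roots of $\rho\mu^2-\gamma\mu+(1-\rho)=0$. Branch convention: for $w\neq0$, $\sqrt w$ is the square root of $w$ whose argument lies in $[0,\pi)$ (branch cut along the positive real axis). *)

(* Complex numbers: an arbitrary numClosedFieldType C
   (e.g. algC); the square root is MathComp's sqrtC = 2.-root, whose value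
   is the root with argument in [0, pi) -- the paper's branch convention. *)
From HB Require Import structures.
From mathcomp Require Import all_boot all_order all_algebra.
Set Implicit Arguments. Unset Strict Implicit. Unset Printing Implicit Defensive.
Import Order.TTheory GRing.Theory Num.Theory.
Local Open Scope ring_scope.

(* ---- Kronecker product, with the index (a, b) of 'I_m * 'I_n encoded as a*n+b ---- *)
Lemma kron_div_lt (m n : nat) (i : 'I_(m * n)) : (i %/ n < m)%N.
Proof.
have := ltn_ord i; move: (nat_of_ord i) => x; clear i.
case: n => [|n]; first by rewrite muln0.
by move=> hi; rewrite ltn_divLR.
Qed.

Lemma kron_mod_lt (m n : nat) (i : 'I_(m * n)) : (i %% n < n)%N.
Proof.
have := ltn_ord i; move: (nat_of_ord i) => x; clear i.
case: n => [|n]; first by rewrite muln0.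
by move=> _; rewrite ltn_pmod.
Qed.

Definition kron_hi (m n : nat) (i : 'I_(m * n)) : 'I_m := Ordinal (kron_div_lt i).
Definition kron_lo (m n : nat) (i : 'I_(m * n)) : 'I_n := Ordinal (kron_mod_lt i).

Definition kronmx (R : pzRingType) (m1 n1 m2 n2 : nat)
  (X : 'M[R]_(m1, n1)) (Y : 'M[R]_(m2, n2)) : 'M[R]_(m1 * m2, n1 * n2) :=
  \matrix_(i, j) (X (kron_hi i) (kron_hi j) * Y (kron_lo i) (kron_lo j)).

Section Platoon.
Variables (C : numClosedFieldType) (N : nat) (rho f g : C).

Definition Amx : 'M[C]_2 := \matrix_(i, j) (if (i == 0%N :> nat) && (j == 1%N :> nat) then 1 else 0).
Definition Kmx : 'M[C]_2 :=
  \matrix_(i, j) (if i == 1%N :> nat then (if j == 0%N :> nat then f else g) else 0).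

(* Q_rho with 1-based indices i, j (0-based ordinals shifted by one) *)
Definition Qrho : 'M[C]_N := \matrix_(i, j)
  (let i1 := i.+1 in let j1 := j.+1 in
   if (1 <= i1 <= N.-1)%N && (j1 == i1.+1) then rho
   else if (2 <= i1 <= N.-1)%N && (j1 == i1.-1) then 1 - rho
   else if (i1 == N) && (j1 == N.-1) then 1
   else 0).

Definition Pmx : 'M[C]_N := 1%:M - Qrho.

(* M = I_N (x) A + P (x) K, acting on z = (z_1, z_1', ..., z_N, z_N') *)
Definition Mmx : 'M[C]_(N * 2) := kronmx 1%:M Amx + kronmx Pmx Kmx.

Definition g0 (nu : C) : 'cV[C]_(N * 2) :=
  \col_i (if i == 1%N :> nat then - (1 - rho) * (f + g * nu) else 0).

Definition avec (nu : C) : 'cV[C]_(N * 2) := - (invmx (Mmx - nu%:M) *m g0 nu).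

(* a_k(nu): the (2k-1)-th (1-based) entry, i.e. 0-based index 2(k-1) *)
(* (for 1 <= k <= N this index is in range; out of range would give 0) *)
Definition a_k (k : nat) (nu : C) : C :=
  oapp (fun i : 'I_(N * 2) => avec nu i 0) 0 (insub (2 * k.-1)%N).
End Platoon.

Definition kappa (C : numClosedFieldType) (rho : C) : C := (1 - rho) / rho.
Definition gammaf (C : numClosedFieldType) (f g nu : C) : C :=
  (f + g * nu - nu ^+ 2) / (f + g * nu).
Definition mu_plus (C : numClosedFieldType) (rho f g nu : C) : C :=
  (gammaf f g nu + sqrtC (gammaf f g nu ^+ 2 - 4%:R * rho * (1 - rho))) / (2%:R * rho).
Definition mu_minus (C : numClosedFieldType) (rho f g nu : C) : C :=
  (gammaf f g nu - sqrtC (gammaf f g nu ^+ 2 - 4%:R * rho * (1 - rho))) / (2%:R * rho).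

From HB Require Import structures.
From mathcomp Require Import all_boot all_order all_algebra.
From mathcomp Require Import ring zify.
Set Implicit Arguments. Unset Strict Implicit. Unset Printing Implicit Defensive.
Import Order.TTheory GRing.Theory Num.Theory.
Local Open Scope ring_scope.

(* Try a = (s_k, nu s_k)_k:
   the first row of every block holds trivially, and after dividing by f + g nu
   and using nu^2 = (f + g nu)(1 - gamma) the second row becomes the three-term
   recurrence rho s_(k+1) - gamma s_k + (1 - rho) s_(k-1) = 0 with s_0 = 1 and
   the free-end condition gamma s_N = s_(N-1).  As mu_+ and mu_- are the roots of
   rho mu^2 - gamma mu + (1 - rho), every kappa^k (c_+ mu_+^(N-k) + c_- mu_-^(N-k))
   solves the recurrence, and c_(+-) = +-(mu_(+-) - mu_(+-)^-1) is the choice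
   meeting the end condition; normalising s_0 = 1 gives the formula. *)

Lemma kron_index_lt (m n : nat) (p : 'I_m * 'I_n) : (p.1 * n + p.2 < m * n)%N.
Proof. case: p => [[a ha] [b hb]] /=; nia. Qed.

Definition kron_index (m n : nat) (p : 'I_m * 'I_n) : 'I_(m * n) :=
  Ordinal (kron_index_lt p).

Lemma kron_hi_index m n p : kron_hi (@kron_index m n p) = p.1.
Proof.
apply: val_inj; case: p => [[a ha] [b hb]] /=.
by rewrite divnMDl ?divn_small ?addn0 //; lia.
Qed.

Lemma kron_lo_index m n p : kron_lo (@kron_index m n p) = p.2.
Proof. by apply: val_inj; case: p => [[a ha] [b hb]] /=; rewrite modnMDl modn_small. Qed.

Lemma kron_indexK m n (i : 'I_(m * n)) : kron_index (kron_hi i, kron_lo i) = i.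
Proof. by apply: val_inj => /=; rewrite -divn_eq. Qed.

Lemma kron_index_bij m n : bijective (@kron_index m n).
Proof.
exists (fun i => (kron_hi i, kron_lo i)); last exact: kron_indexK.
by case=> a b; rewrite kron_hi_index kron_lo_index.
Qed.

Lemma big_kron_index (R : nmodType) m n (F : 'I_(m * n) -> R) :
  \sum_i F i = \sum_a \sum_b F (kron_index (a, b)).
Proof.
rewrite (reindex (@kron_index m n)) /=; last exact/onW_bij/kron_index_bij.
by rewrite pair_big; apply: eq_bigr => -[].
Qed.

Lemma kronmx_col_index (R : pzRingType) m n (X : 'cV[R]_m) (Y : 'cV[R]_n) p :
  (kronmx X Y : 'cV_(m * n)) (kron_index p) 0 = X p.1 0 * Y p.2 0.
Proof.
rewrite mxE kron_hi_index kron_lo_index.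
by congr (X _ _ * Y _ _); apply: val_inj; rewrite /= ?div0n ?mod0n.
Qed.

Lemma mul_kronmx (R : comPzRingType) m1 n1 p1 m2 n2 p2
    (X : 'M[R]_(m1, n1)) (Y : 'M[R]_(m2, n2)) (Z : 'M[R]_(n1, p1)) (W : 'M[R]_(n2, p2)) :
  kronmx X Y *m kronmx Z W = kronmx (X *m Z) (Y *m W).
Proof.
apply/matrixP => i j; rewrite !mxE big_kron_index big_distrl /=.
apply: eq_bigr => a _; rewrite big_distrr /=; apply: eq_bigr => b _.
rewrite !mxE !kron_hi_index !kron_lo_index /=; ring.
Qed.

Lemma sum_if_succ_eq (R : pzSemiRingType) n (b : bool) m (v : R) (s : nat -> R) :
  \sum_(j < n) (if b && (j.+1 == m) then v else 0) * s j.+1 =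
  if b && (0 < m <= n)%N then v * s m else 0.
Proof.
case: b => /=; last by rewrite big1 // => j _; rewrite mul0r.
case: m => [|m]; first by rewrite big1 // => j _; rewrite mul0r.
case: (ltnP m n) => hm /=.
  rewrite (bigD1 (Ordinal hm)) //= eqxx big1 ?addr0 // => j hj.
  by rewrite eqSS ifF ?mul0r //; apply: contraNF hj => /eqP ej; apply/eqP/val_inj.
rewrite big1 // => j _; rewrite eqSS ifF ?mul0r //.
by apply: contraTF (ltn_ord j) => /eqP->; rewrite -leqNgt.
Qed.

Lemma if3_add (R : nmodType) (b1 b2 b3 : bool) (x y z : R) :
  ~~ (b1 && b2) -> ~~ (b1 && b3) -> ~~ (b2 && b3) ->
  (if b1 then x else if b2 then y else if b3 then z else 0) =
  (if b1 then x else 0) + (if b2 then y else 0) + (if b3 then z else 0).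
Proof. by case: b1; case: b2; case: b3 => //= _ _ _; rewrite ?addr0 ?add0r. Qed.

Ltac decide_ifs := repeat match goal with |- context[if ?b then _ else _] =>
  first [have -> : b = true by lia | have -> : b = false by lia] end.

Lemma Qrho_mul_col (C : numClosedFieldType) N (rho : C) (s : nat -> C) (a : 'I_N) :
  (2 <= N)%N ->
  (Qrho N rho *m \col_j s j.+1) a 0 =
  if (a.+2 <= N)%N then rho * s a.+2 + (if a == 0 :> nat then 0 else (1 - rho) * s a)
  else s N.-1.
Proof.
move=> hN; rewrite mxE.
under eq_bigr => j _.
  rewrite !mxE /= if3_add; [rewrite !mulrDl; over | lia..].
rewrite !big_split /= !sum_if_succ_eq.
case: a => [[|a] ha] /=; [| case: (ltnP a.+2 N) => hlt]; decide_ifs;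
  by rewrite ?mul1r ?addr0 ?add0r.
Qed.

Section BinetSequence.
Variables (F : fieldType) (rho m1 m2 : F) (N : nat).
Hypothesis rho_m1m2 : rho * (m1 * m2) = 1 - rho.

Definition binet (j : nat) : F := (m1 - m1^-1) * m1 ^+ j - (m2 - m2^-1) * m2 ^+ j.

Lemma binetSS j : binet j.+2 = (m1 + m2) * binet j.+1 - m1 * m2 * binet j.
Proof. rewrite /binet !exprS; ring. Qed.

Definition binet_profile (k : nat) : F := (m1 * m2) ^+ k * (binet (N - k) / binet N).

Lemma binet_profile0 : binet N != 0 -> binet_profile 0 = 1.
Proof. by move=> hD; rewrite /binet_profile subn0 expr0 mul1r divff. Qed.

Lemma binet_profile_rec i : (i.+2 <= N)%N ->
  rho * (m1 + m2) * binet_profile i.+1 =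
    rho * binet_profile i.+2 + (1 - rho) * binet_profile i.
Proof.
move=> hi; rewrite /binet_profile -rho_m1m2.
have -> : (N - i = (N - i.+2).+2)%N by lia.
have -> : (N - i.+1 = (N - i.+2).+1)%N by lia.
rewrite binetSS !exprS; ring.
Qed.

Lemma binet_profile_last : (0 < N)%N -> m1 != 0 -> m2 != 0 ->
  rho * (m1 + m2) * binet_profile N = binet_profile N.-1.
Proof.
move=> hN h1 h2; rewrite /binet_profile subnn.
case: N hN => // n _; rewrite subSnn /= exprS.
have e0 : m1 * m2 * binet 0 = (m1 - m2) * (1 + m1 * m2) by rewrite /binet; field; rewrite h1 h2.
have e1 : binet 1 = (m1 + m2) * (m1 - m2) by rewrite /binet; field; rewrite h1 h2.
have erho : rho * (1 + m1 * m2) = 1 by rewrite mulrDr mulr1 rho_m1m2 addrC subrK.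
rewrite e1 -[X in _ = X * _]mulr1 -erho.
transitivity ((m1 * m2) ^+ n * (m1 + m2) * rho * (m1 * m2 * binet 0) / binet n.+1).
  by ring.
by rewrite e0; ring.
Qed.

End BinetSequence.

Section Vieta.
Variables (C : numClosedFieldType) (rho f g nu : C).
Hypothesis rho_neq0 : rho != 0.

Lemma mu_plus_add_minus : rho * (mu_plus rho f g nu + mu_minus rho f g nu) = gammaf f g nu.
Proof. by rewrite /mu_plus /mu_minus; field. Qed.

Lemma mu_plus_mul_minus : rho * (mu_plus rho f g nu * mu_minus rho f g nu) = 1 - rho.
Proof.
rewrite /mu_plus /mu_minus.
set G := gammaf f g nu; set r := sqrtC _.
have r2 : r ^+ 2 = G ^+ 2 - 4%:R * rho * (1 - rho) by rewrite sqrtCK.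
transitivity (rho * (G ^+ 2 - r ^+ 2) / (4%:R * rho ^+ 2)).
  by field.
by rewrite r2; field.
Qed.

End Vieta.

Section TravellingWave.
Variables (C : numClosedFieldType) (N : nat) (rho f g nu : C) (s : nat -> C).

Definition profile_col : 'cV[C]_N := \col_j s j.+1.
Definition wave : 'cV[C]_2 := \col_i nu ^+ i.
Definition profile_vec : 'cV[C]_(N * 2) := kronmx profile_col wave.

Lemma Mmx_mul_profile :
  Mmx N rho f g *m profile_vec =
    kronmx profile_col (Amx C *m wave) + kronmx (Pmx N rho *m profile_col) (Kmx f g *m wave).
Proof.
(* fixing the column dimensions lets [1 * 1] unify with [1] *)
by rewrite /Mmx /profile_vec mulmxDl !(@mul_kronmx _ _ _ 1 _ _ 1) mul1mx.
Qed.

Hypothesis N_ge2 : (2 <= N)%N.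
Hypothesis s0 : s 0 = 1.
Hypothesis s_rec : forall i, (i.+2 <= N)%N ->
  gammaf f g nu * s i.+1 = rho * s i.+2 + (1 - rho) * s i.
Hypothesis s_last : gammaf f g nu * s N = s N.-1.

Lemma Pmx_mul_profile (c : 'I_N) :
  (Pmx N rho *m profile_col) c 0 = s c.+1 - (Qrho N rho *m profile_col) c 0.
Proof. by rewrite /Pmx mulmxBl mul1mx !mxE. Qed.

Lemma gammaf_profile_sub_Qrho (c : 'I_N) :
  gammaf f g nu * s c.+1 - (Qrho N rho *m profile_col) c 0 =
    if c == 0 :> nat then 1 - rho else 0.
Proof.
rewrite Qrho_mul_col //; case: ifP => hc.
  by rewrite s_rec //; case: (c : nat) => [|c'] /=; [rewrite s0; ring | rewrite subrr].
have -> : c.+1 = N by have := ltn_ord c; lia.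
by rewrite s_last subrr ifF //; lia.
Qed.

Hypothesis fgnu_neq0 : f + g * nu != 0.

Lemma profile_vec_solves : (Mmx N rho f g - nu%:M) *m profile_vec = - g0 N rho f g nu.
Proof.
have nu2 : nu * nu = (f + g * nu) * (1 - gammaf f g nu) by rewrite /gammaf; field.
apply/matrixP => i j; rewrite [j]ord1 -[i]kron_indexK.
move: (kron_hi i) (kron_lo i) => c b {i j}.
(* locking [kronmx] keeps [mxE] from unfolding the Kronecker entries *)
rewrite mulmxBl Mmx_mul_profile mul_scalar_mx /profile_vec [kronmx]lock !mxE -lock.
rewrite !kronmx_col_index Pmx_mul_profile.
have -> : (Qrho N rho *m profile_col) c 0 =
    gammaf f g nu * s c.+1 - (if c == 0 :> nat then 1 - rho else 0).
  by rewrite -gammaf_profile_sub_Qrho opprB addrC subrK.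
rewrite !mxE !big_ord_recl !big_ord0 /= !mxE /=.
case: b => -[|[|//]] ?; rewrite /bump /=.
  have -> : (c * 2 + 0 == 1)%N = false by lia.
  by ring.
have -> : (c * 2 + 1 == 1)%N = (c == 0 :> nat) by lia.
by case: (c == 0 :> nat); rewrite expr1 [nu * _]mulrCA nu2; ring.
Qed.

Lemma avec_profile : ~~ eigenvalue (Mmx N rho f g) nu -> avec N rho f g nu = profile_vec.
Proof.
move=> noneig; have unitM : Mmx N rho f g - nu%:M \in unitmx.
  by move: noneig; rewrite /eigenvalue /eigenspace negbK kermx_eq0 row_free_unit.
by rewrite /avec -[g0 _ _ _ _ _]opprK -profile_vec_solves mulmxN opprK mulKmx.
Qed.

Lemma a_k_profile k : ~~ eigenvalue (Mmx N rho f g) nu -> (1 <= k <= N)%N ->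
  a_k N rho f g k nu = s k.
Proof.
move=> noneig hk; rewrite /a_k avec_profile //.
have hk1 : (k.-1 < N)%N by lia.
case: insubP => [i _ ei | /negP]; last by lia.
have -> : i = kron_index (Ordinal hk1, 0) by apply: val_inj; rewrite ei /=; lia.
by rewrite /= /profile_vec kronmx_col_index !mxE expr0 mulr1 prednK //; lia.
Qed.

End TravellingWave.

Theorem mainTheorem4 (C : numClosedFieldType) (N : nat) (rho f g omega : C)
  (hN : (2 <= N)%N)
  (hrho_real : rho \is Num.real) (hrho0 : 0 < rho) (hrho1 : rho < 1)
  (hrho_half : rho != 2%:R^-1)
  (hf_real : f \is Num.real) (hf : f < 0)
  (hg_real : g \is Num.real) (hg : g < 0)
  (homega_real : omega \is Num.real) (homega : omega != 0)
  (hnu : ~~ eigenvalue (Mmx N rho f g) ('i * omega))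
  (k : nat) (hk1 : (1 <= k)%N) (hkN : (k <= N)%N) :
  let nu := 'i * omega in
  let mp := mu_plus rho f g nu in
  let mm := mu_minus rho f g nu in
  let den := (mp - mp^-1) * mp ^+ N - (mm - mm^-1) * mm ^+ N in
  den != 0 ->
  a_k N rho f g k nu =
    kappa rho ^+ k *
      (((mp - mp^-1) * mp ^+ (N - k) - (mm - mm^-1) * mm ^+ (N - k)) / den).
Proof.
move=> nu mp mm den den_neq0.
have rho_neq0 : rho != 0 := lt0r_neq0 hrho0.
have mu_mul := mu_plus_mul_minus f g nu rho_neq0.
have mu_add := mu_plus_add_minus f g nu rho_neq0.
have kappaE : kappa rho = mp * mm by rewrite /kappa -mu_mul mulrC mulKf.
have [mp_neq0 mm_neq0] : mp != 0 /\ mm != 0.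
  have : mp * mm != 0 by rewrite -kappaE mulf_neq0 ?invr_eq0 // subr_eq0 gt_eqF.
  by rewrite mulf_eq0 negb_or => /andP.
have fgnu_neq0 : f + g * nu != 0.
  have Re_fgnu : 'Re (f + g * nu) = f by rewrite mulrCA Re_rect // rpredM.
  by apply: contraTneq hf => fgnu0; rewrite -Re_fgnu fgnu0 raddf0 ltxx.
rewrite (a_k_profile (s := binet_profile mp mm N)) ?hk1 //.
- by rewrite kappaE.
- exact: binet_profile0.
- by move=> i hi; rewrite -mu_add binet_profile_rec.
- by rewrite -mu_add binet_profile_last // ltnW.
Qed.
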